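(* Let $K$ be a polyhedral cone and let $S$ be any slack matrix of $K$. Then $K$ is pointed if and only if $\dim(K)=\operatorname{rank}(S)$.
   Context: A matrix $S\in\mathbb{R}^{p\times q}$ is a slack matrix of a polyhedral cone $K\subseteq\mathbb{R}^n$ if there are $A\in\mathbb{R}^{p\times n}$, $B\in\mathbb{R}^{n\times q}$ with $K=\{x\in\mathbb{R}^n: x^TB\ge 0\}=\{y^TA: y\in\mathbb{R}_+^p\}$ and $S=AB$. A cone is pointed if its lineality space (the largest linear subspace it contains) is $\{0\}$. The dimension of a cone is the dimension of its linear span. *)

From HB Require Import structures.
From mathcomp Require Import all_boot all_order all_algebra.
From mathcomp Require Import reals.
Set Implicit Arguments. Unset Strict Implicit. Unset Printing Implicit Defensive.
Import Order.TTheory GRing.Theory Num.Theory.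
Local Open Scope ring_scope.

(* K = { x : x^T B >= 0 } (H-description) *)
Definition hcone (R : realType) (n q : nat) (B : 'M[R]_(n, q)) (x : 'rV[R]_n) : Prop :=
  forall j : 'I_q, 0 <= (x *m B) ord0 j.

(* K = { y^T A : y in R^p_+ } (V-description) *)
Definition vcone (R : realType) (p n : nat) (A : 'M[R]_(p, n)) (x : 'rV[R]_n) : Prop :=
  exists y : 'rV[R]_p, (forall i : 'I_p, 0 <= y ord0 i) /\ x = y *m A.

Definition is_slack_matrix (R : realType) (n p q : nat) (K : 'rV[R]_n -> Prop)
  (S : 'M[R]_(p, q)) : Prop :=
  exists (A : 'M[R]_(p, n)) (B : 'M[R]_(n, q)),
    (forall x, K x <-> hcone B x) /\ (forall x, K x <-> vcone A x) /\ S = A *m B.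

(* K is pointed: its lineality space (largest linear subspace contained in K)
   is {0}, i.e. every linear subspace (row space of some U) contained in K is 0. *)
Definition pointed (R : realType) (n : nat) (K : 'rV[R]_n -> Prop) : Prop :=
  forall U : 'M[R]_n, (forall x : 'rV[R]_n, (x <= U)%MS -> K x) -> \rank U = 0%N.

Definition span_dim (R : realType) (n : nat) (K : 'rV[R]_n -> Prop) (d : nat) : Prop :=
  (exists U : 'M[R]_n, \rank U = d /\ forall x, K x -> (x <= U)%MS) /\
  (forall U : 'M[R]_n, (forall x, K x -> (x <= U)%MS) -> (d <= \rank U)%N).

(* The lineality space of K = {x : x B >= 0} is the left kernel of B, and this
   kernel lies in the row space of A because K = {y A : y >= 0} contains it.
   Rank-nullity for x |-> x B restricted to the row space of A then gives
   rank (A B) + dim (ker B) = rank A, while rank A is the dimension of the span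
   of K, since K lies in the row space of A and contains every row of A. *)
From mathcomp Require Import all_boot all_order all_algebra.
From mathcomp Require Import reals.
Import Order.TTheory GRing.Theory Num.Theory.
Set Implicit Arguments. Unset Strict Implicit. Unset Printing Implicit Defensive.
Local Open Scope ring_scope.

Lemma mxrank_mul_kermx_sub (F : fieldType) (p n q : nat)
    (A : 'M[F]_(p, n)) (B : 'M[F]_(n, q)) :
  (kermx B <= A)%MS -> (\rank (A *m B) + \rank (kermx B))%N = \rank A.
Proof. by move=> kerBA; rewrite -(capmx_idPr kerBA) mxrank_mul_ker. Qed.

Section Cones.
Variable R : realType.

Lemma vcone_submx (p n : nat) (A : 'M[R]_(p, n)) x : vcone A x -> (x <= A)%MS.
Proof. by move=> [y [_ ->]]; apply: submxMl. Qed.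

Lemma vcone_row (p n : nat) (A : 'M[R]_(p, n)) i : vcone A (row i A).
Proof.
exists (delta_mx 0 i); split; last exact: rowE.
by move=> j; rewrite mxE ler0n.
Qed.

Lemma hcone_kermx (n q : nat) (B : 'M[R]_(n, q)) x :
  (x <= kermx B)%MS -> hcone B x.
Proof. by move=> /sub_kermxP xB0 j; rewrite xB0 mxE. Qed.

Lemma hcone_oppr_kermx (n q : nat) (B : 'M[R]_(n, q)) x :
  hcone B x -> hcone B (- x) -> (x <= kermx B)%MS.
Proof.
move=> xB_ge0 NxB_ge0; apply/sub_kermxP/matrixP => i j.
rewrite [i]ord1 [RHS]mxE; apply/eqP; rewrite eq_le (xB_ge0 j) andbT.
by move: (NxB_ge0 j); rewrite mulNmx mxE oppr_ge0.
Qed.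

Lemma pointed_hconeE (n q : nat) (B : 'M[R]_(n, q)) (K : 'rV[R]_n -> Prop) :
  (forall x, K x <-> hcone B x) -> pointed K <-> \rank (kermx B) = 0%N.
Proof.
move=> KB; split=> [pK | ker0 U UK].
  by apply: pK => x /hcone_kermx /KB.
have UkerB : (U <= kermx B)%MS.
  apply/row_subP => i; apply: hcone_oppr_kermx; apply/KB/UK.
    exact: row_sub.
  by rewrite eqmx_opp row_sub.
by apply/eqP; rewrite -leqn0 -ker0 mxrankS.
Qed.

Lemma span_dim_rowsE (p n : nat) (A : 'M[R]_(p, n)) (K : 'rV[R]_n -> Prop) d :
  (forall x, K x -> (x <= A)%MS) -> (forall i, K (row i A)) ->
  span_dim K d <-> d = \rank A.
Proof.
move=> KA Krow.
have A_sub (U : 'M_n) : (forall x, K x -> (x <= U)%MS) -> (A <= U)%MS.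
  by move=> KU; apply/row_subP => i; apply/KU/Krow.
have KgenA x : K x -> (x <= <<A>>)%MS by move=> /KA; rewrite genmxE.
split=> [[[U [<- KU]] minU] | ->].
  apply/eqP; rewrite eqn_leq (mxrankS (A_sub U KU)) andbT.
  by rewrite -(genmxE A); apply: minU.
split; first by exists <<A>>%MS; rewrite genmxE.
by move=> U /A_sub /mxrankS.
Qed.

End Cones.

Theorem lemma2p13 (R : realType) (n p q : nat) (K : 'rV[R]_n -> Prop)
  (S : 'M[R]_(p, q)) :
  is_slack_matrix K S -> (pointed K <-> span_dim K (\rank S)).
Proof.
move=> [A [B [KB [KA ->]]]].
have KsubA x : K x -> (x <= A)%MS by move=> /KA /vcone_submx.
have Krow i : K (row i A) by apply/KA/vcone_row.
have kerBA : (kermx B <= A)%MS.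
  by apply/row_subP => i; apply/KsubA/KB/hcone_kermx/row_sub.
rewrite (pointed_hconeE KB) (span_dim_rowsE _ KsubA Krow).
have rank_split := mxrank_mul_kermx_sub kerBA.
split=> [ker0 | rankAB]; first by rewrite -rank_split ker0 addn0.
by move/eqP: rank_split; rewrite rankAB -[X in _ == X]addn0 eqn_add2l => /eqP.
Qed.
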